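(* For every arity $k\ge0$ (and also for unbounded arity), the $k$-ary unbiased black-box complexity of the extreme jump function $\mathrm{Jump}_{n/2-1}$ on $\{0,1\}^n$, $n$ even, is $\Omega(n)$.
   Context: For $x\in\{0,1\}^n$ let $|x|_1=\sum_ix_i$. For $n$ even, the extreme jump function $\mathrm{Jump}_{n/2-1}:\{0,1\}^n\to\mathbb{R}$ is given by $\mathrm{Jump}_{n/2-1}(x)=n$ if $|x|_1=n$, $=n/2$ if $|x|_1=n/2$, and $=0$ otherwise. For $k\ge 0$, a $k$-ary unbiased distribution is a family $(D(\cdot\mid y^{(1)},\dots,y^{(k)}))$ of probability distributions on $\{0,1\}^n$ such that $D(x\mid y^{(1)},\dots,y^{(k)})=D(x\oplus z\mid y^{(1)}\oplus z,\dots,y^{(k)}\oplus z)$ and $D(x\mid y^{(1)},\dots,y^{(k)})=D(\sigma(x)\mid\sigma(y^{(1)}),\dots,\sigma(y^{(k)}))$ for all $x,z,y^{(i)}$ and permutations $\sigma$ of $[n]$ ($\oplus$ bitwise XOR, $\sigma(x)=x_{\sigma(1)}\cdots x_{\sigma(n)}$). A $k$-ary unbiased black-box algorithm samples $x^{(0)}$ uniformly at random and queries $f(x^{(0)})$; then for $t=1,2,\dots$, depending only on $f(x^{(0)}),\dots,f(x^{(t-1)})$ (and its randomness), it chooses up to $k$ indices $i_1,\dots,i_k\in\{0,\dots,t-1\}$ and a $k$-ary unbiased distribution $D$, samples $x^{(t)}\sim D(\cdot\mid x^{(i_1)},\dots,x^{(i_k)})$ and queries $f(x^{(t)})$. The $k$-ary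 unbiased black-box complexity of $f$ is the infimum over such algorithms of the expected number of queries until a global maximizer of $f$ is first queried. Asymptotics are as $n\to\infty$. *)

From HB Require Import structures.
From mathcomp Require Import all_boot all_fingroup.
From Stdlib Require Import Reals.

Set Implicit Arguments.
Unset Strict Implicit.
Unset Printing Implicit Defensive.

HB.instance Definition _ :=
  Monoid.isComLaw.Build R R0 Rplus
    (fun a b c => Logic.eq_sym (Rplus_assoc a b c)) Rplus_comm Rplus_0_l.

Definition bits (n : nat) := {ffun 'I_n -> bool}.

Definition ones n (x : bits n) : nat := #|[pred i | x i]|.

Definition Jump n (x : bits n) : nat :=
  if ones x == n then n else if ones x == n./2 then n./2 else 0.

Definition bxor n (z x : bits n) : bits n := [ffun i => addb (x i) (z i)].

Definition bperm n (s : {perm 'I_n}) (x : bits n) : bits n := [ffun i => x (s i)].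

Definition distribution (T : finType) (p : T -> R) : Prop :=
  (forall x, (0 <= p x)%R) /\ \big[Rplus/R0]_(x : T) p x = 1%R.

(* An unbiased distribution family; D ys x is the probability of x given the
   (ordered) list ys = (y^(1),...,y^(m)) of parent points.  The arity is the
   length of the list actually supplied. *)
Definition unbiased n (D : seq (bits n) -> bits n -> R) : Prop :=
  [/\ forall ys, distribution (D ys),
      forall ys x z, D ys x = D (map (bxor z) ys) (bxor z x)
    & forall ys x (s : {perm 'I_n}), D ys x = D (map (bperm s) ys) (bperm s x)].

(* A policy: given the random seed and the history of fitness values
   f(x^(0)),...,f(x^(t-1)), choose the list of indices (i_1,...,i_m) and the
   unbiased distribution D. *)
Definition policy n (S : Type) :=
  S -> seq nat -> seq nat * (seq (bits n) -> bits n -> R).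

(* Validity of an algorithm of arity k (None = unbounded arity) with finite
   seed space S, seed distribution w and policy pol. *)
Definition valid_alg n (k : option nat) (S : finType) (w : S -> R)
  (pol : policy n S) : Prop :=
  distribution w /\
  forall s h, (0 < size h)%N ->
    [/\ all (fun i => i < size h)%N (pol s h).1,
        (if k is Some k' then (size (pol s h).1 <= k')%N else True)
      & unbiased (pol s h).2].

Definition step n (f : bits n -> nat) (S : Type) (pol : policy n S) (s : S)
  (hist : seq (bits n)) (x : bits n) : R :=
  let a := pol s (map f hist) in
  a.2 (map (fun i => nth x hist i) a.1) x.

(* probability (given the seed s) of the history whose REVERSED list of points
   is rs (latest point first) *)
Fixpoint hprob_rev n (f : bits n -> nat) (S : Type) (pol : policy n S) (s : S)
  (rs : seq (bits n)) : R :=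
  match rs with
  | [::] => 1%R
  | x :: rs' =>
      match rs' with
      | [::] => (/ (pow 2 n))%R
      | _ :: _ => (hprob_rev f pol s rs' * step f pol s (rev rs') x)%R
      end
  end.

Definition is_max n (f : bits n -> nat) (x : bits n) : bool :=
  [forall y, f y <= f x].

(* P(no global maximizer among x^(0),...,x^(t)) given seed s *)
Definition surv n (f : bits n -> nat) (S : Type) (pol : policy n S) (s : S)
  (t : nat) : R :=
  \big[Rplus/R0]_(xs : (t.+1).-tuple (bits n) | all (fun x => ~~ is_max f x) xs)
     hprob_rev f pol s (rev xs).

(* Partial sum  sum_{m < M+1} P(T > m)  of  E[T] = sum_{m >= 0} P(T > m),
   T = number of queries until a global maximizer is first queried. *)
Definition exp_partial n (f : bits n -> nat) (S : finType) (w : S -> R)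
  (pol : policy n S) (M : nat) : R :=
  (1 + \big[Rplus/R0]_(t < M) \big[Rplus/R0]_(s : S) (w s * surv f pol s t))%R.

From HB Require Import structures.
From mathcomp Require Import all_boot all_fingroup.
From Stdlib Require Import Reals Lra Lia.
From mathcomp Require Import zify.

(* If the fitness history is frozen to a fixed sequence h, an unbiased
   algorithm becomes a process whose law is invariant under XOR-shifting all
   points, so each single query is uniform on {0,1}^n and equals the optimum
   1^n with probability 2^-n.  The real run on Jump coincides, trajectory by
   trajectory, with the frozen run whose h is its own fitness history, and
   Jump takes only 3 values; a union bound over the query index and the
   3^(t+1) possible histories shows that the optimum is found within t+1
   queries with probability at most (t+1) 3^(t+1) / 2^n <= 1/2 for
   t < n/4.  Hence E[T] >= sum_(t < n/4) P(T > t) >= n/8. *)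

Set Implicit Arguments.
Unset Strict Implicit.
Unset Printing Implicit Defensive.

Lemma big_Rle (I : Type) (r : seq I) (P : pred I) (F G : I -> R) :
  (forall i, P i -> (F i <= G i)%R) ->
  (\big[Rplus/R0]_(i <- r | P i) F i <= \big[Rplus/R0]_(i <- r | P i) G i)%R.
Proof.
move=> FG; apply: (big_rec2 (fun a b => a <= b)%R); first lra.
by move=> i a b Pi ab; apply: Rplus_le_compat; auto.
Qed.

Lemma big_Rge0 (I : Type) (r : seq I) (P : pred I) (F : I -> R) :
  (forall i, P i -> (0 <= F i)%R) -> (0 <= \big[Rplus/R0]_(i <- r | P i) F i)%R.
Proof.
move=> F0; apply: (big_ind (fun a => 0 <= a)%R) => //; [lra | move=> a b; lra].
Qed.

Lemma big_Rmult_l (I : Type) (r : seq I) (P : pred I) (F : I -> R) a :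
  (a * \big[Rplus/R0]_(i <- r | P i) F i = \big[Rplus/R0]_(i <- r | P i) (a * F i))%R.
Proof.
apply: (big_rec2 (fun x y => a * x = y)%R); first by rewrite Rmult_0_r.
by move=> i x y _ <-; rewrite Rmult_plus_distr_l.
Qed.

Lemma big_Rconst (T : finType) (c : R) :
  \big[Rplus/R0]_(i : T) c = (INR #|T| * c)%R.
Proof.
rewrite big_const; elim: #|T| => [|m IH]; first by rewrite /=; lra.
by rewrite S_INR Rmult_plus_distr_r -IH /=; lra.
Qed.

Lemma sum_tuple_cons (X : finType) m (F : (m.+1).-tuple X -> R) :
  \big[Rplus/R0]_(rs : (m.+1).-tuple X) F rs =
  \big[Rplus/R0]_(x : X) \big[Rplus/R0]_(ys : m.-tuple X) F (cons_tuple x ys).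
Proof.
rewrite pair_big /= (reindex (fun p : X * m.-tuple X => cons_tuple p.1 p.2)) //.
apply: onW_bij; exists (fun rs => (thead rs, [tuple of behead rs])).
  by move=> [x ys]; congr (_, _); apply: val_inj.
by move=> [[|x s] //= Hs]; apply: val_inj.
Qed.

Lemma INR_expn2 n : INR (expn 2 n) = (2 ^ n)%R.
Proof. by elim: n => [|n IH] //; rewrite expnS mult_INR IH. Qed.

Lemma card_bits n : #|bits n| = expn 2 n.
Proof. by rewrite card_ffun card_bool card_ord. Qed.

Lemma bxorK n (z : bits n) : involutive (bxor z).
Proof. by move=> x; apply/ffunP => i; rewrite !ffunE -addbA addbb addbF. Qed.

Lemma eq_bxor_swap n (x y z : bits n) : (x == bxor z y) = (z == bxor x y).
Proof.
apply/eqP/eqP => E; apply/ffunP => i; move/ffunP: E => /(_ i); rewrite !ffunE;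
  by case: (x i); case: (y i); case: (z i).
Qed.

Definition all_ones n : bits n := [ffun _ => true].

Fixpoint prob_rev n (K : seq (bits n) -> bits n -> R) (rs : seq (bits n)) : R :=
  match rs with
  | [::] => 1%R
  | x :: rs' =>
      match rs' with
      | [::] => (/ 2 ^ n)%R
      | _ :: _ => (prob_rev K rs' * K (rev rs') x)%R
      end
  end.

Lemma hprob_revE n (f : bits n -> nat) (S : Type) (pol : policy n S) s rs :
  hprob_rev f pol s rs = prob_rev (step f pol s) rs.
Proof.
elim: rs => [|x [|y rs] IH] //.
by rewrite -[LHS]/(hprob_rev f pol s (y :: rs) * step f pol s (rev (y :: rs)) x)%R IH.
Qed.

Lemma prob_rev_cons n K (x : bits n) ys :
  ys != [::] -> prob_rev K (x :: ys) = (prob_rev K ys * K (rev ys) x)%R.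
Proof. by case: ys. Qed.

Section XorInvariantKernel.

Variables (n t : nat) (K : seq (bits n) -> bits n -> R).
Hypothesis K_dist : forall p, (0 < size p <= t)%N -> distribution (K p).
Hypothesis K_bxor : forall z p x,
  (0 < size p <= t)%N -> K (map (bxor z) p) (bxor z x) = K p x.

Lemma prob_rev_ge0 rs : (size rs <= t.+1)%N -> (0 <= prob_rev K rs)%R.
Proof.
elim: rs => [|x rs IH] /= Hs; first lra.
case: rs IH Hs => [|y rs] IH Hs.
  by apply: Rlt_le; apply: Rinv_0_lt_compat; apply: pow_lt; lra.
apply: Rmult_le_pos; first exact: IH (ltnW Hs).
have [K0 _] : distribution (K (rev (y :: rs))) by apply: K_dist; rewrite size_rev.
exact: K0.
Qed.

Lemma prob_rev_bxor z rs :
  (size rs <= t.+1)%N -> prob_rev K (map (bxor z) rs) = prob_rev K rs.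
Proof.
elim: rs => [|x rs IH] // Hs.
have [->|rs0] := eqVneq rs [::]; first by [].
have zrs0 : map (bxor z) rs != [::] by rewrite -size_eq0 size_map size_eq0.
rewrite map_cons !prob_rev_cons // IH ?(ltnW Hs) // -map_rev K_bxor //.
by rewrite size_rev lt0n size_eq0 rs0.
Qed.

Lemma sum_prob_rev : \big[Rplus/R0]_(rs : (t.+1).-tuple (bits n)) prob_rev K rs = 1%R.
Proof.
suff sum1 m : (m <= t)%N ->
    \big[Rplus/R0]_(rs : (m.+1).-tuple (bits n)) prob_rev K rs = 1%R by exact: sum1.
elim: m => [|m IH] Hm; rewrite sum_tuple_cons.
  rewrite (eq_bigr (fun _ => / 2 ^ n)%R); last first.
    move=> x _; rewrite (eq_bigr (fun _ => / 2 ^ n)%R) => [|ys _]; last by rewrite tuple0.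
    by rewrite big_Rconst card_tuple /=; lra.
  rewrite big_Rconst card_bits INR_expn2.
  by apply: Rinv_r; apply: pow_nonzero; lra.
rewrite exchange_big /= -[RHS](IH (ltnW Hm)); apply: eq_bigr => ys _.
rewrite (eq_bigr (fun x => prob_rev K ys * K (rev ys) x)%R); last first.
  by move=> x _; case: ys => [[|a s] Hs].
have [_ K1] : distribution (K (rev ys)) by apply: K_dist; rewrite size_rev size_tuple.
by rewrite -big_Rmult_l K1 Rmult_1_r.
Qed.

(* Shifting by z maps the event [rs_i = y] onto [rs_i = y + z] without
   changing probabilities, so all 2^n such events are equally likely. *)
Lemma sum_prob_rev_tnth (i : 'I_t.+1) (y : bits n) :
  \big[Rplus/R0]_(rs : (t.+1).-tuple (bits n) | tnth rs i == y) prob_rev K rs =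
  (/ 2 ^ n)%R.
Proof.
set L := (X in X = _).
pose shift z (rs : (t.+1).-tuple (bits n)) := [tuple of map (bxor z) rs].
have shiftK z : involutive (shift z).
  by move=> rs; apply: val_inj; rewrite /= -map_comp map_id_in // => x _ /=; rewrite bxorK.
have Lshift z : L = \big[Rplus/R0]_(rs | tnth rs i == bxor z y) prob_rev K rs.
  rewrite /L (reindex_inj (inv_inj (shiftK z))); apply: eq_big => rs.
    by rewrite tnth_map (inv_eq (bxorK z)).
  by move=> _; rewrite prob_rev_bxor // size_tuple.
have : (INR #|bits n| * L = 1)%R.
  rewrite -big_Rconst (eq_bigr _ (fun z _ => Lshift z)).
  under eq_bigr => z _ do rewrite big_mkcond.
  rewrite exchange_big /= -sum_prob_rev; apply: eq_bigr => rs _.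
  rewrite -big_mkcond (eq_bigl (pred1 (bxor (tnth rs i) y))) ?big_pred1_eq //.
  by move=> z; rewrite /= eq_bxor_swap.
rewrite card_bits INR_expn2 => L1.
have P : (2 ^ n <> 0)%R by apply: pow_nonzero; lra.
by apply: (Rmult_eq_reg_l (2 ^ n)) => //; rewrite L1 Rinv_r.
Qed.

End XorInvariantKernel.

(* The step of the algorithm when the fitness values it observes are forced to
   be the fixed sequence h, whatever points were actually queried. *)
Definition blind_step n (S : Type) (pol : policy n S) (s : S) (h : seq nat)
    (p : seq (bits n)) (x : bits n) : R :=
  let a := pol s (take (size p) h) in a.2 (map (fun i => nth x p i) a.1) x.

Section UnbiasedAlgorithm.

Variables (n : nat) (k : option nat) (S : finType) (w : S -> R) (pol : policy n S).
Hypothesis pol_valid : valid_alg k w pol.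
Variable s : S.

Lemma blind_action_valid h (p : seq (bits n)) : (0 < size p <= size h)%N ->
  let a := pol s (take (size p) h) in
  all (fun i => i < size p)%N a.1 /\ unbiased a.2.
Proof.
move=> /andP [p0 ph]; have [_ V] := pol_valid.
have hp : size (take (size p) h) = size p by rewrite size_takel.
by case: (V s (take (size p) h)); rewrite hp.
Qed.

(* [blind_step] uses the sampled point [x] as the default of [nth]; as the
   parent indices are in range, any default [x0] will do. *)
Lemma blind_stepE h (p : seq (bits n)) x0 x : (0 < size p <= size h)%N ->
  let a := pol s (take (size p) h) in
  blind_step pol s h p x = a.2 (map (nth x0 p) a.1) x.
Proof.
move=> /blind_action_valid [idx _]; rewrite /blind_step; congr (_ _ x).
by apply/eq_in_map => i /(allP idx) ip; apply: set_nth_default.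
Qed.

Lemma blind_step_dist h (p : seq (bits n)) :
  (0 < size p <= size h)%N -> distribution (blind_step pol s h p).
Proof.
move=> hp; have [_ [D _ _]] := blind_action_valid hp.
have [D0 D1] := D (map (nth (all_ones n) p) (pol s (take (size p) h)).1).
split=> [x|]; first by rewrite (blind_stepE (all_ones n) _ hp).
by under eq_bigr do rewrite (blind_stepE (all_ones n) _ hp).
Qed.

Lemma blind_step_bxor h z (p : seq (bits n)) x : (0 < size p <= size h)%N ->
  blind_step pol s h (map (bxor z) p) (bxor z x) = blind_step pol s h p x.
Proof.
move=> hp; have hzp : (0 < size (map (bxor z) p) <= size h)%N by rewrite size_map.
rewrite (blind_stepE (bxor z (all_ones n)) _ hzp) (blind_stepE (all_ones n) _ hp).
have [idx [_ U _]] := blind_action_valid hp.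
rewrite size_map [RHS](U _ _ z) -map_comp; congr (_ _ _).
by apply/eq_in_map => i /(allP idx) ip /=; apply: nth_map.
Qed.

Lemma step_blind f (p : seq (bits n)) x : step f pol s p x = blind_step pol s (map f p) p x.
Proof. by rewrite /blind_step take_oversize ?size_map. Qed.

Lemma step_dist f (p : seq (bits n)) : (0 < size p)%N -> distribution (step f pol s p).
Proof.
move=> p0; have [D0 D1] : distribution (blind_step pol s (map f p) p).
  by apply: blind_step_dist; rewrite size_map p0 /=.
split=> [x|]; first by rewrite step_blind.
by under eq_bigr do rewrite step_blind.
Qed.

Lemma prob_rev_step_blind f h (rs : seq (bits n)) :
  map f (rev rs) = take (size rs) h ->
  prob_rev (step f pol s) rs = prob_rev (blind_step pol s h) rs.
Proof.
elim: rs => [|x rs IH] // E.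
have [->|rs0] := eqVneq rs [::]; first by [].
have E' : map f (rev rs) = take (size rs) h.
  move: E; rewrite rev_cons map_rcons => /(congr1 (take (size rs))).
  by rewrite take_takel // -cats1 take_size_cat ?size_map ?size_rev.
by rewrite !prob_rev_cons // IH // /step /blind_step size_rev E'.
Qed.

Lemma surv_ge_unique_max f (y : bits n) t : (forall x, is_max f x -> x = y) ->
  (1 - \big[Rplus/R0]_(rs : (t.+1).-tuple (bits n) | y \in rs) prob_rev (step f pol s) rs
   <= surv f pol s t)%R.
Proof.
move=> max_y.
have revK_tuple : involutive (@rev_tuple t.+1 (bits n)).
  by move=> rs; apply: val_inj; rewrite /= revK.
have -> : surv f pol s t =
    \big[Rplus/R0]_(rs : (t.+1).-tuple (bits n) | all (fun x => ~~ is_max f x) rs)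
      prob_rev (step f pol s) rs.
  rewrite /surv (reindex_inj (inv_inj revK_tuple)); apply: eq_big => rs.
    by rewrite /= all_rev.
  by move=> _; rewrite /= revK hprob_revE.
have Kd p : (0 < size p <= t)%N -> distribution (step f pol s p).
  by case/andP => p0 _; apply: step_dist.
have tot := sum_prob_rev Kd.
rewrite (bigID (fun rs : (t.+1).-tuple (bits n) => all (fun x => ~~ is_max f x) rs)) /= in tot.
have sub_le (a b c : R) : (a + b = 1 -> b <= c -> 1 - c <= a)%R by lra.
apply: sub_le tot _.
rewrite big_mkcond [X in (_ <= X)%R]big_mkcond; apply: big_Rle => rs _.
case: ifP => [/allPn [x xrs /negPn /max_y <-]|_]; first by rewrite xrs; lra.
case: ifP => _; last lra.
exact: prob_rev_ge0 Kd _ (eq_leq (size_tuple rs)).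
Qed.

Section FactoredFitness.

Variables (f : bits n -> nat) (V : finType) (g : V -> nat) (code : bits n -> V).
Hypothesis f_factor : forall x, f x = g (code x).

Lemma blind_step_xor_kernel t (c : (t.+1).-tuple V) :
  (forall p, (0 < size p <= t)%N -> distribution (blind_step pol s (map g c) p)) /\
  (forall z p x, (0 < size p <= t)%N ->
     blind_step pol s (map g c) (map (bxor z) p) (bxor z x) = blind_step pol s (map g c) p x).
Proof.
have le_h p : (0 < size p <= t)%N -> (0 < size p <= size (map g c))%N.
  by rewrite size_map size_tuple => /andP [-> /leqW].
by split=> [p /le_h /blind_step_dist | z p x /le_h /blind_step_bxor].
Qed.

(* Every trajectory has, as its frozen counterpart, the one whose history is
   its own fitness history, encoded by [code]. *)
Lemma prob_rev_step_le t (rs : (t.+1).-tuple (bits n)) :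
  (prob_rev (step f pol s) rs <=
   \big[Rplus/R0]_(c : (t.+1).-tuple V) prob_rev (blind_step pol s (map g c)) rs)%R.
Proof.
pose c0 := map_tuple code (rev_tuple rs).
rewrite (bigD1 c0) //= -[X in (X <= _)%R]Rplus_0_r; apply: Rplus_le_compat.
  apply: Req_le; apply: prob_rev_step_blind.
  by rewrite take_oversize ?size_map ?size_rev ?size_tuple // -map_comp (eq_map f_factor).
apply: big_Rge0 => c _; have [Kd _] := blind_step_xor_kernel c.
exact: prob_rev_ge0 Kd _ (eq_leq (size_tuple rs)).
Qed.

Lemma hit_prob_le t (y : bits n) :
  (\big[Rplus/R0]_(rs : (t.+1).-tuple (bits n) | y \in rs) prob_rev (step f pol s) rs
   <= INR (t.+1 * expn #|V| t.+1) * / 2 ^ n)%R.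
Proof.
set B := fun (c : (t.+1).-tuple V) (rs : (t.+1).-tuple (bits n)) =>
  prob_rev (blind_step pol s (map g c)) rs.
have B_ge0 c rs : (0 <= B c rs)%R.
  by have [Kd _] := blind_step_xor_kernel c; apply: prob_rev_ge0 Kd _ (eq_leq (size_tuple rs)).
pose G rs := \big[Rplus/R0]_(i < t.+1)
  (if tnth rs i == y then \big[Rplus/R0]_(c : (t.+1).-tuple V) B c rs else R0).
have G_ge0 rs : (0 <= G rs)%R.
  by apply: big_Rge0 => i _; case: ifP => _; [apply: big_Rge0 | lra].
apply: (Rle_trans _ (\big[Rplus/R0]_rs G rs)).
  rewrite big_mkcond; apply: big_Rle => rs _; case: ifP => [/tnthP [i0 yi0] | _] //.
  rewrite /G (bigD1 i0) //= -yi0 eqxx -[X in (X <= _)%R]Rplus_0_r.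
  apply: Rplus_le_compat; first exact: prob_rev_step_le.
  by apply: big_Rge0 => i _; case: ifP => _; [apply: big_Rge0 | lra].
rewrite /G exchange_big /=; under eq_bigr => i _ do rewrite -big_mkcond exchange_big /=.
rewrite (eq_bigr (fun _ => \big[Rplus/R0]_(c : (t.+1).-tuple V) / 2 ^ n)%R); last first.
  move=> i _; apply: eq_bigr => c _; have [Kd Kx] := blind_step_xor_kernel c.
  exact: sum_prob_rev_tnth Kd Kx i y.
by rewrite !big_Rconst card_tuple card_ord mult_INR Rmult_assoc; apply: Rle_refl.
Qed.

End FactoredFitness.

End UnbiasedAlgorithm.

Lemma ones_eq_all_ones n (x : bits n) : ones x = n -> x = all_ones n.
Proof.
move=> xn; have /subset_cardP : #|[pred i | x i]| = #|'I_n| by rewrite card_ord.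
move=> /(_ (subset_predT _)) xT.
by apply/ffunP => i; rewrite ffunE; have := xT i; rewrite !inE.
Qed.

Lemma ones_all_ones n : ones (all_ones n) = n.
Proof. by rewrite /ones -[RHS](card_ord n); apply: eq_card => i; rewrite inE ffunE. Qed.

Lemma is_max_Jump n (x : bits n) : (0 < n)%N -> is_max (@Jump n) x -> x = all_ones n.
Proof.
move=> n0 /forallP /(_ (all_ones n)); rewrite /Jump ones_all_ones eqxx.
case: ifP => [/eqP /ones_eq_all_ones // | _].
case: ifP => _; last by rewrite leqNgt n0.
by rewrite leqNgt ltn_half_double -addnn; lia.
Qed.

Definition Jump_level n (x : bits n) : 'I_3 :=
  inord (if ones x == n then 2 else if ones x == n./2 then 1 else 0).

Definition Jump_value n (l : 'I_3) : nat := nth 0%N [:: 0; n./2; n]%N l.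

Lemma JumpE n (x : bits n) : Jump x = Jump_value n (Jump_level x).
Proof.
by rewrite /Jump /Jump_value /Jump_level; case: ifP => _; [|case: ifP => _]; rewrite inordK.
Qed.

Lemma hit_bound_le_half n (t : nat) : (t.+1 <= n %/ 4)%N ->
  (INR (t.+1 * expn 3 t.+1) * / 2 ^ n <= / 2)%R.
Proof.
move=> tn.
have : (t.+1 * expn 3 t.+1 * 2 <= expn 2 n)%N.
  have le2 : (t.+1 <= expn 2 t.+1)%N by apply: ltnW; apply: ltn_expl.
  have le34 : (expn 3 t.+1 <= expn 4 t.+1)%N by rewrite leq_exp2r.
  have e8 : expn 2 (3 * t.+1) = (expn 2 t.+1 * expn 4 t.+1)%N by rewrite expnM -expnMn.
  apply: (@leq_trans (expn 2 (3 * t.+1) * 2)); last by rewrite -expnSr leq_exp2l //; lia.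
  by rewrite leq_mul2r e8 leq_mul.
move/leP/le_INR; rewrite mult_INR INR_expn2.
set a := INR _ => le.
have P : (2 ^ n <> 0)%R by apply: pow_nonzero; lra.
rewrite -[X in (_ <= X)%R](Rinv_r_simpl_l (2 ^ n) (/ 2)) //.
apply: Rmult_le_compat_r; first by apply: Rlt_le; apply: Rinv_0_lt_compat; apply: pow_lt; lra.
simpl INR in le; lra.
Qed.

Lemma surv_Jump_ge_half n k (S : finType) (w : S -> R) (pol : policy n S) s t :
  valid_alg k w pol -> (0 < n)%N -> (t.+1 <= n %/ 4)%N ->
  (/ 2 <= surv (@Jump n) pol s t)%R.
Proof.
move=> V n0 tn; apply: Rle_trans (surv_ge_unique_max V s t (@is_max_Jump n^~ n0)).
have := hit_prob_le V s (@JumpE n) t (all_ones n); rewrite card_ord => hit.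
apply: (Rle_trans _ (1 - INR (t.+1 * expn 3 t.+1) * / 2 ^ n)).
  by have := hit_bound_le_half tn; lra.
by apply: Rplus_le_compat_l; apply: Ropp_le_contravar.
Qed.

Theorem lemma11 :
  forall k : option nat,
  exists c : R, (0 < c)%R /\
  exists N : nat,
  forall n : nat, (N <= n)%N -> ~~ odd n ->
  forall (S : finType) (w : S -> R) (pol : policy n S),
    @valid_alg n k S w pol ->
    exists M : nat, (c * INR n <= exp_partial (@Jump n) w pol M)%R.
Proof.
move=> k; exists (/ 8)%R; split; first lra.
exists 1%N => n n0 _ S w pol V; exists (n %/ 4).
have [[w0 w1] _] := V.
have half_le t : (t < n %/ 4)%N ->
    (/ 2 <= \big[Rplus/R0]_(s : S) (w s * surv (@Jump n) pol s t))%R.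
  move=> tn; rewrite -[X in (X <= _)%R]Rmult_1_r -w1 big_Rmult_l.
  apply: big_Rle => s _; rewrite Rmult_comm; apply: Rmult_le_compat_l => //.
  exact: surv_Jump_ge_half V n0 tn.
apply: (Rle_trans _ (1 + \big[Rplus/R0]_(t < n %/ 4) / 2)%R).
  rewrite big_Rconst card_ord.
  have /leP/le_INR : (n <= 4 * (n %/ 4) + 3)%N by lia.
  rewrite plus_INR mult_INR; simpl INR; lra.
by apply: Rplus_le_compat_l; apply: big_Rle => t _; apply: half_le.
Qed.
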